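(* Let $r\ge3$ be an integer and $\lambda\in[\frac15,1]$. Then for all $0<\epsilon\le1$, $f_{r,\lambda}(\epsilon)<\lambda^2$, where $f_{r,\lambda}(\epsilon)=\frac{1}{r-1}\sum_{i=1}^{r-1}\binom{r-1}{i}(1-\epsilon)^{r-1-i}\epsilon^{i-1}\frac{\lambda^2}{\lambda+(1-\lambda)2^{1-i}}$. *)

From HB Require Import structures.
From mathcomp Require Import all_boot all_order all_algebra.
From mathcomp Require Import reals.
Set Implicit Arguments. Unset Strict Implicit. Unset Printing Implicit Defensive.
Import Order.TTheory GRing.Theory Num.Theory.
Local Open Scope ring_scope.

Definition f_rl (R : realType) (r : nat) (lam eps : R) : R :=
  (r.-1)%:R^-1 * \sum_(1 <= i < r)
    ('C(r.-1, i))%:R * (1 - eps) ^+ (r.-1 - i) * eps ^+ i.-1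
      * (lam ^+ 2 / (lam + (1 - lam) * (2 ^+ i.-1)^-1)).

From HB Require Import structures.
From mathcomp Require Import all_boot all_order all_algebra.
From mathcomp Require Import reals.
From mathcomp Require Import zify ring lra.
Import Order.TTheory GRing.Theory Num.Theory.
Set Implicit Arguments. Unset Strict Implicit.
Local Open Scope ring_scope.

(* Write n = r - 1, w_i = C(n,i) (1-eps)^(n-i) eps^(i-1) >= 0 and
   D_i = lam + (1 - lam) 2^(1-i), so that f_{r,lam}(eps) = (1/n) sum_i w_i lam^2 / D_i.
   The proof compares each summand lam^2 / D_i with i lam^2:
   - for lam in [1/5, 1] one has i D_i >= 1, with equality only at i = 1 and
     strict inequality for i >= 2 (this reduces to the integer inequality
     5 2^(i-1) < i (2^(i-1) + 4)), hence lam^2 / D_i <= i lam^2, strictly if i >= 2;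
   - the weights satisfy the binomial "mean" identity sum_i i w_i = n, so
     sum_i w_i i lam^2 = n lam^2;
   - the last weight w_n = eps^(n-1) is positive and n >= 2, so the
     comparison is strict in the last summand, giving f_{r,lam}(eps) < lam^2. *)

Definition denom (R : realType) (lam : R) (i : nat) : R :=
  lam + (1 - lam) * (2 ^+ i.-1)^-1.

(* D_i is a convex combination of 1 and 2^(1-i), hence positive. *)
Lemma denom_gt0 (R : realType) (lam : R) (i : nat) :
  0 <= lam -> lam <= 1 -> 0 < denom lam i.
Proof.
move=> lam_ge0 lam_le1; rewrite /denom.
have pow_gt0 : 0 < (2 ^+ i.-1 : R)^-1 by rewrite invr_gt0 exprn_gt0.
have [->|lam_neq0] := eqVneq lam 0; first by rewrite subr0 mul1r add0r.
have lam_gt0 : 0 < lam by rewrite lt_def lam_neq0 lam_ge0.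
have : 0 <= (1 - lam) * (2 ^+ i.-1)^-1 by apply: mulr_ge0; lra.
lra.
Qed.

(* The integer inequality behind i D_i > 1 for lam = 1/5: it is checked for
   i = 2, 3, 4, and for i >= 5 already 5 2^(i-1) <= i 2^(i-1). *)
Lemma pow2_index_bound (i : nat) :
  (2 <= i)%N -> (5 * 2 ^ i.-1 < i * (2 ^ i.-1 + 4))%N.
Proof. by move: i => [|[|[|[|[|k]]]]] // _; nia. Qed.

(* For i >= 2 and lam >= 1/5, i D_i > 1.  As i D_i is affine in lam with
   nonnegative slope i (1 - 2^(1-i)), it suffices to treat lam = 1/5. *)
Lemma index_denom_gt1 (R : realType) (lam : R) (i : nat) :
  (2 <= i)%N -> 5^-1 <= lam -> lam <= 1 -> 1 < i%:R * denom lam i.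
Proof.
move=> i_ge2 lam_ge lam_le; rewrite /denom.
have int_bound := pow2_index_bound i_ge2.
have -> : (2 ^+ i.-1 : R) = (2 ^ i.-1)%:R by rewrite natrX.
set k := (2 ^ i.-1)%N in int_bound *.
have k_ge1 : 1 <= k%:R :> R by rewrite ler1n expn_gt0.
have real_bound : 5 * k%:R < i%:R * (k%:R + 4) :> R.
  by move: int_bound; rewrite -(ltr_nat R) !natrM natrD.
have i_ge0 : 0 <= i%:R :> R by [].
set s := k%:R in k_ge1 real_bound *; set I := i%:R in i_ge0 real_bound *.
have -> : I * (lam + (1 - lam) * s^-1) = I * (lam * (s - 1) + 1) / s.
  by field; lra.
rewrite ltr_pdivlMr ?mul1r; last lra.
have slope_ge0 : 0 <= I * ((lam - 5^-1) * (s - 1)).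
  by apply: mulr_ge0 => //; apply: mulr_ge0; lra.
nra.
Qed.

Lemma index_denom_ge1 (R : realType) (lam : R) (i : nat) :
  (1 <= i)%N -> 5^-1 <= lam -> lam <= 1 -> 1 <= i%:R * denom lam i.
Proof.
case: i => [|[|i]] // _ lam_ge lam_le; last exact/ltW/index_denom_gt1.
by rewrite /denom /= expr0 invr1 mulr1 mul1r; lra.
Qed.

Lemma summand_le (R : realType) (lam : R) (i : nat) :
  (1 <= i)%N -> 5^-1 <= lam -> lam <= 1 ->
  lam ^+ 2 / denom lam i <= i%:R * lam ^+ 2.
Proof.
move=> i_ge1 lam_ge lam_le.
rewrite ler_pdivrMr ?denom_gt0 //; try lra.
rewrite mulrAC -[leLHS]mul1r ler_wpM2r ?sqr_ge0 //.
exact: index_denom_ge1.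
Qed.

Lemma summand_lt (R : realType) (lam : R) (i : nat) :
  (2 <= i)%N -> 5^-1 <= lam -> lam <= 1 ->
  lam ^+ 2 / denom lam i < i%:R * lam ^+ 2.
Proof.
move=> i_ge2 lam_ge lam_le.
rewrite ltr_pdivrMr ?denom_gt0 //; try lra.
rewrite mulrAC -[ltLHS]mul1r ltr_pM2r ?exprn_gt0 //; last lra.
exact: index_denom_gt1.
Qed.

(* The mean of the binomial distribution: sum_{i=1}^n i C(n,i) (1-e)^(n-i) e^(i-1) = n,
   obtained from i C(n,i) = n C(n-1,i-1) and the binomial theorem for (1-e)+e. *)
Lemma binomial_mean (R : comPzRingType) (n : nat) (e : R) :
  \sum_(1 <= i < n.+1) ('C(n, i))%:R * (1 - e) ^+ (n - i) * e ^+ i.-1 * i%:R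
  = n%:R.
Proof.
case: n => [|n]; first by rewrite big_geq.
rewrite big_add1 /= big_mkord.
transitivity (n.+1%:R * \sum_(i < n.+1) (1 - e) ^+ (n - i) * e ^+ i *+ 'C(n, i)).
  rewrite mulr_sumr; apply: eq_bigr => i _.
  have bin_diag : i.+1%:R * ('C(n.+1, i.+1))%:R = n.+1%:R * ('C(n, i))%:R :> R.
    by rewrite -!natrM mul_bin_diag.
  rewrite subSS -mulr_natr.
  transitivity (i.+1%:R * ('C(n.+1, i.+1))%:R * ((1 - e) ^+ (n - i) * e ^+ i)).
    by ring.
  by rewrite bin_diag; ring.
by rewrite -exprDn subrK expr1n mulr1.
Qed.

Theorem mainTheorem7 (R : realType) (r : nat) (lam eps : R) :
  (3 <= r)%N -> 5^-1 <= lam -> lam <= 1 -> 0 < eps -> eps <= 1 ->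
  f_rl r lam eps < lam ^+ 2.
Proof.
case: r => [|[|[|m]]] // _ lam_ge lam_le eps_gt0 eps_le1.
set n := m.+2.
set w := fun i => ('C(n, i))%:R * (1 - eps) ^+ (n - i) * eps ^+ i.-1 : R.
have -> : f_rl m.+3 lam eps = n%:R^-1 * \sum_(1 <= i < n.+1) w i * (lam ^+ 2 / denom lam i).
  by [].
have weighted_bound : \sum_(1 <= i < n.+1) w i * (i%:R * lam ^+ 2) = n%:R * lam ^+ 2.
  by rewrite -(binomial_mean n eps) mulr_suml; apply: eq_bigr => i _; rewrite mulrA.
rewrite ltr_pdivrMl ?ltr0n // -weighted_bound.
rewrite big_nat_recr // [ltRHS]big_nat_recr //=.
apply: ler_ltD.
  apply: ler_sum_nat => i /andP[i_ge1 _]; apply: ler_wpM2l; last exact: summand_le.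
  by rewrite /w !mulr_ge0 ?exprn_ge0 //; lra.
rewrite ltr_pM2l; first exact: summand_lt.
rewrite /w /= subnn expr0 mulr1 binn mul1r; exact: exprn_gt0.
Qed.
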